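(* Let $r\ge1$ and let $\mathcal{R}$ be a Rouquier block of $\mathcal{A}_e^r$ which is not a core block. Let $(\boldsymbol\lambda,\mathbf{s})\in\mathcal{R}$ and write $\eta(\lambda^{(k)},s_k)=(\boldsymbol\rho^k,\mathbf{t}^k)$ for $1\le k\le r$. Then $\sum_{k=1}^r t^k_{i+1}-\sum_{k=1}^r t^k_i\ge0$ for all $0\le i<e-1$.
   Context: Fix an integer $e\ge 2$. A partition is a weakly decreasing sequence $\lambda=(\lambda_1,\lambda_2,\dots)$ of non-negative integers with finite sum $|\lambda|$; $\Lambda$ denotes the set of partitions and $\Lambda^{(m)}$ the set of $m$-multipartitions, i.e. $m$-tuples $\boldsymbol\lambda=(\lambda^{(1)},\dots,\lambda^{(m)})$ of partitions, with $|\boldsymbol\lambda|=\sum_k|\lambda^{(k)}|$. A $\beta$-set is a subset $B\subseteq\mathbb{Z}$ containing all sufficiently small integers and no sufficiently large ones. For $\lambda\in\Lambda$ and $s\in\mathbb{Z}$ set $B_s(\lambda)=\{\lambda_i-i+s : i\ge 1\}$; every $\beta$-set equals $B_s(\lambda)$ for a unique pair $(\lambda,s)$. Let $\mathcal{A}_e=\Lambda\times\mathbb{Z}$ (abacus configurations with $e$ runners) and $\mathcal{A}_e^m=\Lambda^{(m)}\times\mathbb{Z}^m$. Blocks: for $(\boldsymbol\lambda,\mathbf{s})\in\mathcal{A}_e^m$, its $e$-residue multiset is the multiset of the values $s_k+y-x \bmod e$ over all nodes $(x,y,k)$ with $x\ge1$, $1\le y\le\lambda^{(k)}_x$, $1\le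 k\le m$. Define $(\boldsymbol\lambda,\mathbf{s})\approx_e(\boldsymbol\mu,\mathbf{s}')$ iff $\mathbf{s}=\mathbf{s}'$, $|\boldsymbol\lambda|=|\boldsymbol\mu|$ and the $e$-residue multisets coincide. Its equivalence classes are called blocks. The map $\eta$: for $(\lambda,s)\in\mathcal{A}_e$ with $B=B_s(\lambda)$ and $0\le i<e$, the set $C_i=\{(b-i)/e : b\in B,\ b\equiv i \bmod e\}$ is a $\beta$-set, so $C_i=B_{t_i}(\rho_i)$ for a unique $(\rho_i,t_i)\in\Lambda\times\mathbb{Z}$; set $\eta(\lambda,s)=((\rho_0,\dots,\rho_{e-1}),(t_0,\dots,t_{e-1}))$. The $e$-weight of $\lambda$ is $\mathrm{wt}(\lambda)=\sum_i|\rho_i|$ (it is positive iff $\lambda$ has a removable $e$-rim hook). Rouquier: $(\lambda,s)\in\mathcal{A}_e$ with $\eta(\lambda,s)=(\boldsymbol\rho,\mathbf{t})$ is a Rouquier partition if $\mathrm{wt}(\lambda)\le t_{i+1}-t_i+1$ for all $0\le i<e-1$. $(\boldsymbol\lambda,\mathbf{s})\in\mathcal{A}_e^r$ is a Rouquier multipartition if $(\lambda^{(k)},s_k)$ is a Rouquier partition for every $1\le k\le r$. A block of $\mathcal{A}_e^r$ is a Rouquier block if all its elements are Rouquier multipartitions. A block $\mathcal{R}$ of $\mathcal{A}_e^r$ is a core block if for every $(\boldsymbol\lambda,\mathbf{s})\in\mathcal{R}$ every component $\lambda^{(k)}$ has $e$-weight $0$ (no removable $e$-rim hooks). *)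

From mathcomp Require Import all_boot all_order all_algebra.
Set Implicit Arguments. Unset Strict Implicit. Unset Printing Implicit Defensive.
Import Order.TTheory GRing.Theory Num.Theory.
Local Open Scope ring_scope.

(* A partition: weakly decreasing finite sequence of positive naturals
   (trailing zeros omitted, so that each partition has a unique representation).
   lambda_i (i >= 1) is  nth 0 l (i-1). *)
Definition is_partition (l : seq nat) : bool :=
  sorted geq l && all (fun x => 0 < x)%N l.

Definition psize (l : seq nat) : nat := sumn l.

Definition in_beta (l : seq nat) (s : int) (b : int) : Prop :=
  exists i : nat, b = (nth 0%N l i)%:Z - (i.+1)%:Z + s.

(* Relational form of eta: eta(lambda,s) = (rho, t) with rho_i, t_i for 0 <= i < e,
   i.e. C_i = { (b - i)/e : b \in B_s(lambda), b = i mod e } = B_{t_i}(rho_i). *)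
Definition eta_rel (e : nat) (l : seq nat) (s : int)
    (rho : nat -> seq nat) (t : nat -> int) : Prop :=
  forall i : nat, (i < e)%N ->
    is_partition (rho i) /\
    (forall c : int, in_beta (rho i) (t i) c <-> in_beta l s (c * e%:Z + i%:Z)).

Definition eweight (e : nat) (rho : nat -> seq nat) : nat :=
  (\sum_(i < e) psize (rho i))%N.

Definition rouquier_partition (e : nat) (l : seq nat) (s : int) : Prop :=
  forall rho t, eta_rel e l s rho t ->
    forall i : nat, (i.+1 < e)%N ->
      (eweight e rho)%:Z <= t i.+1 - t i + 1.

(* e-weight zero (no removable e-rim hook) *)
Definition weight_zero (e : nat) (l : seq nat) (s : int) : Prop :=
  forall rho t, eta_rel e l s rho t -> eweight e rho = 0%N.

Definition is_multipartition (r : nat) (lam : 'I_r -> seq nat) : Prop :=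
  forall k, is_partition (lam k).

Definition msize (r : nat) (lam : 'I_r -> seq nat) : nat :=
  (\sum_(k < r) psize (lam k))%N.

Definition rescount (e r : nat) (lam : 'I_r -> seq nat) (s : 'I_r -> int)
    (j : nat) : nat :=
  (\sum_(k < r) \sum_(x < size (lam k)) \sum_(y < nth 0%N (lam k) x)
     (((s k + (y.+1)%:Z - (x.+1)%:Z) %% e%:Z)%Z == j%:Z : nat))%N.

Definition block_equiv (e r : nat) (lam : 'I_r -> seq nat) (s : 'I_r -> int)
    (mu : 'I_r -> seq nat) (s' : 'I_r -> int) : Prop :=
  (forall k, s k = s' k) /\ msize lam = msize mu /\
  (forall j : nat, (j < e)%N -> rescount e lam s j = rescount e mu s' j).

Definition rouquier_multipartition (e r : nat) (lam : 'I_r -> seq nat)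
    (s : 'I_r -> int) : Prop :=
  forall k, rouquier_partition e (lam k) (s k).

Definition rouquier_block (e r : nat) (lam : 'I_r -> seq nat) (s : 'I_r -> int) : Prop :=
  forall mu s', is_multipartition mu -> block_equiv e lam s mu s' ->
    rouquier_multipartition e mu s'.

Definition core_block (e r : nat) (lam : 'I_r -> seq nat) (s : 'I_r -> int) : Prop :=
  forall mu s', is_multipartition mu -> block_equiv e lam s mu s' ->
    forall k, weight_zero e (mu k) (s' k).

(* The residue counts of a charged partition depend only on its e-weight and on
   the charges of its runners: counting nodes row by row and regrouping the beads
   of the abacus by runner, the number of nodes of residue j is the e-weight plus
   a quantity determined by s and t.  First, the sums
   over the components of the runner charges, \sum_k t^k_i, are block invariants.
   Second, a node of e-weight can be moved from one component to another without
   leaving the block, by shrinking a runner of the first and enlarging a runner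
   of the second while keeping all runner charges.  Since the block is not a core
   block, some element has a component of positive weight; moving weight to the
   k-th component produces an element of the block whose k-th component has
   weight at least 1, so the Rouquier condition gives t^k_{i+1} >= t^k_i for its
   (unchanged) runner charges.  Summing over k and using the invariance of the
   sums gives the claim. *)

From mathcomp Require Import all_boot all_order all_algebra zify ring.
From Stdlib Require Import Classical ClassicalEpsilon.
Set Implicit Arguments.
Unset Strict Implicit.
Unset Printing Implicit Defensive.
Import Order.TTheory GRing.Theory Num.Theory.
Local Open Scope ring_scope.

Lemma leq_sum_term (I : finType) (F : I -> nat) i : (F i <= \sum_j F j)%N.
Proof. by rewrite (bigD1 i) //= leq_addr. Qed.

Lemma sumr_one (T : Type) (r : seq T) : \sum_(x <- r) (1 : int) = (size r)%:Z.
Proof. by rewrite big_const_seq count_predT iter_addr addr0 -natz. Qed.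

Lemma big_iota0 (R : Type) (idx : R) (op : R -> R -> R) n (F : nat -> R) :
  \big[op/idx]_(i <- iota 0 n) F i = \big[op/idx]_(i < n) F i.
Proof. by rewrite -[in LHS](subn0 n) big_mkord. Qed.

Lemma sum_nth_widen (l : seq nat) n : (size l <= n)%N ->
  (\sum_(x < n) nth 0 l x)%N = sumn l.
Proof.
move=> ln; rewrite sumnE (big_nth 0%N) big_mkord (big_ord_widen n _ ln) [RHS]big_mkcond /=.
by apply: eq_bigr => x _; case: ltnP => // /(nth_default 0%N) ->.
Qed.

Lemma nth_le_sumn (l : seq nat) i : (nth 0%N l i <= sumn l)%N.
Proof. by elim: l i => [|x l IHl] [|i] //=; [lia | have := IHl i; lia]. Qed.

(** * Beta-sets *)

Definition bead (l : seq nat) (s : int) (x : nat) : int :=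
  (nth 0%N l x)%:Z - (x.+1)%:Z + s.

Lemma in_beta_nil s v : in_beta [::] s v <-> v < s.
Proof.
split; first by case=> i ->; rewrite nth_nil; lia.
by move=> vs; exists (absz (s - v - 1)%R); rewrite nth_nil; lia.
Qed.

Lemma in_beta_cons x l s v :
  in_beta (x :: l) (s + 1) v <-> v = x%:Z + s \/ in_beta l s v.
Proof.
split; first by case=> [[|i]] /= ->; [left | right; exists i]; lia.
by case=> [->|[i ->]]; [exists 0%N | exists i.+1]; rewrite /=; lia.
Qed.

Lemma in_beta_below l s v : v < s - (size l)%:Z -> in_beta l s v.
Proof.
by move=> vs; exists (absz (s - v - 1)%R); rewrite nth_default; lia.
Qed.

Lemma in_beta_lt l s v : in_beta l s v -> v < s + (sumn l)%:Z.
Proof. by case=> i ->; have := nth_le_sumn l i; lia. Qed.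

(* Zero parts are not stored, so a new top bead just above the charge is
   absorbed by the charge alone. *)
Lemma in_beta_add_top_bead l s x : is_partition l -> (head 0%N l <= x)%N ->
  exists l', is_partition l' /\
    forall v, in_beta l' (s + 1) v <-> v = x%:Z + s \/ in_beta l s v.
Proof.
case/andP=> l_sorted l_pos hx; case: x hx => [|x] hx.
  have -> : l = [::] by case: l l_sorted l_pos hx => //= y l' _ /andP[]; lia.
  exists [::]; split=> // v; rewrite !in_beta_nil; lia.
exists (x.+1 :: l); split; last by move=> v; apply: in_beta_cons.
rewrite /is_partition /= l_pos andbT.
by case: l l_sorted {l_pos} hx => //= y l' ->; rewrite andbT.
Qed.

Lemma beta_set_of_bounded (len : nat) (P : int -> Prop) (lo : int) :
  (forall v, v < lo -> P v) -> (forall v, lo + len%:Z <= v -> ~ P v) ->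
  exists l s, is_partition l /\ forall v, in_beta l s v <-> P v.
Proof.
elim: len P lo => [|len IHlen] P lo Plo Phi.
  exists [::], lo; split=> // v; rewrite in_beta_nil; split; first exact: Plo.
  by move=> Pv; case: (ltP v lo) => // hv; case: (Phi v); rewrite ?addr0.
pose h := lo + len%:Z.
have Ple v : P v -> v <= h.
  by move=> Pv; case: (leP v h) => // hv; case: (Phi v) => //; rewrite /h; lia.
have [l [s [l_part Hl]]] : exists l s, is_partition l /\
    forall v, in_beta l s v <-> P v /\ v < h.
  by apply: (IHlen _ lo) => [v hv | v hv []]; [split; [apply: Plo|] | ]; rewrite /h; lia.
have [Ph | nPh] := classic (P h); last first.
  exists l, s; split=> // v; rewrite Hl; split=> [[]//|Pv]; split=> //.
  by rewrite lt_def Ple // andbT; apply/eqP=> hv; apply: nPh; rewrite hv.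
have [_ top] : P (bead l s 0) /\ bead l s 0 < h := (Hl _).1 (ex_intro _ 0%N erefl).
rewrite /bead nth0 in top.
have [|l' [l'_part Hl']] := in_beta_add_top_bead s (x := absz (h - s)%R) l_part; first lia.
exists l', (s + 1); split=> // v; rewrite Hl' Hl.
have hs : (absz (h - s))%:Z + s = h by lia.
rewrite hs; split=> [[->|[]]//|Pv].
by have := Ple v Pv; rewrite le_eqVlt => /orP[/eqP|]; [left|right].
Qed.

(** * Beads and runners *)

Definition beads (l : seq nat) (s : int) (n : nat) : seq int :=
  map (bead l s) (iota 0 n).

Lemma nth_sorted_geq (l : seq nat) x y : sorted geq l -> (x <= y)%N ->
  (nth 0%N l y <= nth 0%N l x)%N.
Proof.
move=> l_sorted xy; case: (ltnP y (size l)) => yl; last by rewrite nth_default.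
have geq_trans : transitive geq by move=> a b c ba cb; apply: leq_trans cb ba.
apply: (sorted_leq_nth geq_trans leqnn) => //.
by rewrite inE (leq_ltn_trans xy yl).
Qed.

Lemma bead_inj l s : sorted geq l -> injective (bead l s).
Proof.
move=> l_sorted x y; wlog xy : x y / (x <= y)%N => [wlog|].
  by case: (leqP x y) => [|/ltnW] xy E; [|symmetry]; apply: wlog.
have := nth_sorted_geq l_sorted xy; rewrite /bead; lia.
Qed.

Lemma uniq_beads l s n : sorted geq l -> uniq (beads l s n).
Proof. by move=> l_sorted; rewrite map_inj_uniq ?iota_uniq //; apply: bead_inj. Qed.

Lemma mem_beads l s n v : (size l <= n)%N ->
  v \in beads l s n <-> s - n%:Z <= v /\ in_beta l s v.
Proof.
move=> ln; split.
  by case/mapP=> x; rewrite mem_iota => /andP[_ xn] ->; split; [rewrite /bead; lia | exists x].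
case=> vlo [x vx]; apply/mapP; exists x => //; rewrite mem_iota /=.
by case: (ltnP x n) => // nx; move: vx; rewrite nth_default; lia.
Qed.

Lemma sum_beads l s n : (size l <= n)%N ->
  \sum_(v <- beads l s n) v = (sumn l)%:Z + \sum_(x < n) (s - (x.+1)%:Z).
Proof.
move=> ln; rewrite big_map big_iota0 -(sum_nth_widen ln).
rewrite (big_morph Posz PoszD (erefl 0%:Z)) -big_split /=.
by apply: eq_bigr => x _; rewrite /bead; ring.
Qed.

(* [M] is so low that the beads of [l] at or above [M * e] are its first
   [s - M * e] beads, and those of runner [i] at or above [M] its first [t i - M]. *)
Definition window (e : nat) (l : seq nat) (s : int) (rho : nat -> seq nat)
    (t : nat -> int) (M : int) : Prop :=
  M * e%:Z <= s - (size l)%:Z /\ forall i, (i < e)%N -> M <= t i - (size (rho i))%:Z.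

Section Abacus.
Variables (e : nat) (e_gt0 : (0 < e)%N).

Lemma modz_bounds v : 0 <= (v %% e%:Z)%Z < e%:Z.
Proof. by rewrite modz_ge0 ?ltz_pmod //; lia. Qed.

Lemma modz_runner c i : (i < e)%N -> ((c * e%:Z + i%:Z) %% e%:Z)%Z = i%:Z.
Proof. by move=> ie; rewrite modzMDl modz_small //; lia. Qed.

Lemma divz_runner c i : (i < e)%N -> ((c * e%:Z + i%:Z) %/ e%:Z)%Z = c.
Proof. by move=> ie; rewrite divzMDl ?divz_small ?addr0 //; lia. Qed.

Lemma runner_beta_set l s i : exists p : seq nat * int, is_partition p.1 /\
  forall c, in_beta p.1 p.2 c <-> in_beta l s (c * e%:Z + i%:Z).
Proof.
pose lo : int := - ((absz s)%:Z + (size l)%:Z + i%:Z).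
pose len : nat := (absz s + size l + i + absz s + sumn l)%N.
have [v lov | v hiv /in_beta_lt | l' [s' H]] :=
  beta_set_of_bounded (len := len) (lo := lo)
    (P := fun c => in_beta l s (c * e%:Z + i%:Z)).
- by apply: in_beta_below; rewrite /lo in lov; nia.
- by rewrite /lo /len in hiv; nia.
- by exists (l', s').
Qed.

Lemma eta_rel_exists l s : exists rho t, eta_rel e l s rho t.
Proof.
have [p Hp] := choice _ (runner_beta_set l s).
by exists (fun i => (p i).1), (fun i => (p i).2) => i _; apply: Hp.
Qed.

Lemma eta_rel_realizable rho t : (forall i, (i < e)%N -> is_partition (rho i)) ->
  exists l s, is_partition l /\ eta_rel e l s rho t.
Proof.
move=> rho_part.
pose K : nat := (\sum_(i < e) (absz (t i) + size (rho i) + sumn (rho i)))%N.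
have K_ge i : (i < e)%N -> (absz (t i) + size (rho i) + sumn (rho i) <= K)%N.
  by move=> ie; apply: (leq_sum_term (fun i : 'I_e => _) (Ordinal ie)).
pose res v := absz (v %% e%:Z)%Z.
have res_lt v : (res v < e)%N by have := modz_bounds v; rewrite /res; lia.
pose P v := in_beta (rho (res v)) (t (res v)) (v %/ e%:Z)%Z.
have [v lov | v hiv | l [s [l_part Hl]]] :=
  beta_set_of_bounded (len := 2 * (K.+1 * e)) (P := P) (lo := - (K.+1 * e)%N%:Z).
- apply: in_beta_below; have := K_ge _ (res_lt v).
  have : (v %/ e%:Z)%Z < - K.+1%:Z by rewrite ltz_divLR; lia.
  lia.
- move/in_beta_lt; have := K_ge _ (res_lt v).
  have : K.+1%:Z <= (v %/ e%:Z)%Z by rewrite lez_divRL; lia.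
  lia.
exists l, s; split=> // i ie; split; first exact: rho_part.
by move=> c; rewrite Hl /P /res modz_runner // divz_runner.
Qed.

Definition runner_beads (rho : nat -> seq nat) (t : nat -> int) (M : int) :=
  flatten [seq [seq c * e%:Z + i%:Z | c <- beads (rho i) (t i) (absz (t i - M)%R)]
          | i <- iota 0 e].

Lemma mem_runner_beads l s rho t M v : eta_rel e l s rho t ->
  (forall i, (i < e)%N -> M <= t i - (size (rho i))%:Z) ->
  v \in runner_beads rho t M <-> M * e%:Z <= v /\ in_beta l s v.
Proof.
move=> eta_ls M_le; split.
  case/flatten_mapP=> i; rewrite mem_iota => /andP[_ ie] /mapP[c c_bead ->].
  have [_ runner_i] := eta_ls i ie.
  have rho_i_le : (size (rho i) <= absz (t i - M))%N by have := M_le i ie; lia.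
  have [cM /runner_i cl] := (mem_beads _ _ rho_i_le).1 c_bead.
  have Mc : M <= c by have := M_le i ie; lia.
  by split=> //; nia.
case=> vM vl; set i := absz (v %% e%:Z)%Z; set c := (v %/ e%:Z)%Z.
have [v_ge0 v_lt] := andP (modz_bounds v).
have ie : (i < e)%N by rewrite /i; lia.
have v_eq : v = c * e%:Z + i%:Z by rewrite {1}(divz_eq v e%:Z) /i; lia.
have [_ runner_i] := eta_ls i ie.
apply/flatten_mapP; exists i; first by rewrite mem_iota.
have rho_i_le : (size (rho i) <= absz (t i - M))%N by have := M_le i ie; lia.
rewrite v_eq; apply: map_f; apply/(mem_beads _ _ rho_i_le).
split; last by apply/runner_i; rewrite -v_eq.
have : M <= c by rewrite lez_divRL //; lia.
by have := M_le i ie; lia.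
Qed.

Lemma uniq_runner_beads rho t M : (forall i, (i < e)%N -> is_partition (rho i)) ->
  uniq (runner_beads rho t M).
Proof.
move=> rho_part; rewrite /runner_beads.
set f := fun i => [seq _ | c <- _].
suff : forall n, (n <= e)%N -> uniq (flatten (map f (iota 0 n))) by apply.
elim=> [|n IHn] ne //; rewrite -addn1 iotaD add0n map_cat flatten_cat /= cats0.
rewrite cat_uniq IHn ?(ltnW ne) //=.
have /andP[n_sorted _] := rho_part n ne.
rewrite map_inj_uniq ?uniq_beads ?andbT //; last by move=> c d /addIr /mulIf; apply; lia.
apply/hasPn=> v /mapP[c _ ->]; apply/negP=> /flatten_mapP[i].
rewrite mem_iota => /andP[_ ni] /mapP[d _] /(congr1 (fun v => v %% e%:Z)%Z).
by rewrite !modz_runner //; lia.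
Qed.

Lemma sum_beads_by_runner l s rho t M (g : int -> int) : is_partition l ->
  eta_rel e l s rho t -> window e l s rho t M ->
  \sum_(v <- beads l s (absz (s - M * e%:Z)%R)) g v =
  \sum_(i < e) \sum_(c <- beads (rho i) (t i) (absz (t i - M)%R)) g (c * e%:Z + i%:Z).
Proof.
move=> /andP[l_sorted _] eta_ls [lM rhoM].
rewrite (perm_big (runner_beads rho t M)); last first.
  apply: uniq_perm; rewrite ?uniq_beads ?uniq_runner_beads //.
    by move=> i ie; case: (eta_ls i ie).
  have l_le : (size l <= absz (s - M * e%:Z)%R)%N by lia.
  move=> v; apply/idP/idP.
    by case/(mem_beads _ _ l_le)=> vlo vl; apply/(mem_runner_beads _ eta_ls rhoM); split=> //; lia.
  by case/(mem_runner_beads _ eta_ls rhoM)=> vlo vl; apply/(mem_beads _ _ l_le); split=> //; lia.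
rewrite big_flatten big_map big_iota0 /=.
by apply: eq_bigr => i _; rewrite big_map.
Qed.

Lemma window_exists l s rho t : exists M0, forall M, M <= M0 -> window e l s rho t M.
Proof.
pose F (i : 'I_e) := (absz (t i) + size (rho i))%N.
exists (- (absz s + size l + \sum_i F i)%N%:Z) => M MK; split.
  have : M <= - (absz s + size l)%N%:Z by lia.
  nia.
move=> i ie; move: MK (leq_sum_term F (Ordinal ie)).
by move: (\sum_j F j)%N => S; rewrite /F /=; lia.
Qed.

Lemma eta_rel_charge l s rho t : is_partition l -> eta_rel e l s rho t ->
  s = \sum_(i < e) t i.
Proof.
move=> l_part eta_ls; have [M0 win] := window_exists l s rho t.
have [lM rhoM] := win M0 (lexx _).
have := sum_beads_by_runner (fun=> 1) l_part eta_ls (win M0 (lexx _)).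
rewrite sumr_one size_map size_iota (eq_bigr (fun i : 'I_e => t i - M0)); last first.
  by move=> i _; rewrite sumr_one size_map size_iota; have := rhoM i (ltn_ord i); lia.
rewrite sumrB sumr_const card_ord -mulr_natr natz.
by move: (\sum_(i < e) t i) => T; lia.
Qed.

Lemma eta_rel_change_runners l s rho t rho' : is_partition l ->
  eta_rel e l s rho t -> (forall i, (i < e)%N -> is_partition (rho' i)) ->
  exists l', is_partition l' /\ eta_rel e l' s rho' t.
Proof.
move=> l_part eta_ls rho'_part; have [l' [s' [l'_part eta']]] := eta_rel_realizable t rho'_part.
by exists l'; rewrite (eta_rel_charge l_part eta_ls) -(eta_rel_charge l'_part eta').
Qed.

(** * Residue counts *)

(* A primitive of the indicator function of [j + e Z] (see [rescum_step]): the
   nodes of residue [j] in a row are counted by the values of [rescum j] at its ends. *)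
Definition rescum (j : nat) (v : int) : int := ((v - j%:Z) %/ e%:Z)%Z.

Lemma divz_near0 m : - e%:Z <= m < e%:Z -> (m %/ e%:Z)%Z = - ((m < 0)%R : nat)%:Z.
Proof.
case/andP=> m_ge m_lt; have [m_neg|m_ge0] := ltP m 0; last by rewrite divz_small //; lia.
have -> : m = -1 * e%:Z + (m + e%:Z) by ring.
by rewrite divzMDl ?divz_small //; lia.
Qed.

Lemma rescum_runner j c i : (i < e)%N -> (j < e)%N ->
  rescum j (c * e%:Z + i%:Z) = c - ((i < j)%N : nat)%:Z.
Proof.
by move=> ie je; rewrite /rescum -addrA divzMDl ?divz_near0; lia.
Qed.

Lemma rescum_step j v : (j < e)%N ->
  rescum j v - rescum j (v - 1) = ((v %% e%:Z)%Z == j%:Z)%:Z.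
Proof.
move=> je; have [r_ge0 r_lt] := andP (modz_bounds v).
rewrite /rescum (divz_eq v e%:Z).
move: (v %/ e%:Z)%Z (v %% e%:Z)%Z r_ge0 r_lt => q r r_ge0 r_lt.
rewrite modzMDl modz_small ?r_ge0 // -!addrA !divzMDl ?divz_near0; lia.
Qed.

Lemma count_residue_row j a n : (j < e)%N ->
  (\sum_(y < n) (((a + y%:Z) %% e%:Z)%Z == j%:Z))%N%:Z =
  rescum j (a + n%:Z - 1) - rescum j (a - 1).
Proof.
move=> je; elim: n => [|n IHn]; first by rewrite big_ord0 addr0 subrr.
rewrite big_ord_recr PoszD IHn /= -(rescum_step (a + n%:Z) je).
have -> : a + n.+1%:Z - 1 = a + n%:Z by lia.
ring.
Qed.

Definition part_rescount (l : seq nat) (s : int) (j : nat) : nat :=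
  \sum_(x < size l) \sum_(y < nth 0%N l x)
    (((s + (y.+1)%:Z - (x.+1)%:Z) %% e%:Z)%Z == j%:Z : nat).

Lemma part_rescount_beads l s j n : (j < e)%N -> (size l <= n)%N ->
  (part_rescount l s j)%:Z =
  \sum_(v <- beads l s n) rescum j v - \sum_(v <- beads [::] s n) rescum j v.
Proof.
move=> je ln; rewrite !big_map !big_iota0 -sumrB.
have row x : (\sum_(y < nth 0%N l x)
    (((s + (y.+1)%:Z - (x.+1)%:Z) %% e%:Z)%Z == j%:Z))%N%:Z =
    rescum j (bead l s x) - rescum j (bead [::] s x).
  rewrite (eq_bigr (fun y : 'I_ _ => (((s - x%:Z + y%:Z) %% e%:Z)%Z == j%:Z : nat))).
    by rewrite count_residue_row // /bead nth_nil; congr (rescum j _ - rescum j _); ring.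
  by move=> y _; have -> : s + (y.+1)%:Z - (x.+1)%:Z = s - x%:Z + y%:Z by ring.
rewrite /part_rescount (big_morph Posz PoszD (erefl 0%:Z)).
rewrite (eq_bigr _ (fun (x : 'I_(size l)) _ => row x)).
rewrite (big_ord_widen n (fun x => rescum j (bead l s x) - rescum j (bead [::] s x)) ln).
rewrite big_mkcond; apply: eq_bigr => x _; case: ltnP => // lx.
by rewrite /bead nth_default // nth_nil subrr.
Qed.




(* Contributions of the empty partition of charge [s] and of empty runners of
   charges [t]; they do not depend on the partition. *)
Definition vacuum_rescum (s M : int) (j : nat) : int :=
  \sum_(v <- beads [::] s (absz (s - M * e%:Z)%R)) rescum j v.

Definition runner_vacuum_rescum (t : nat -> int) (M : int) (j : nat) : int :=
  \sum_(i < e) \sum_(c <- beads [::] (t i) (absz (t i - M)%R)) rescum j (c * e%:Z + i%:Z).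

Lemma sum_rescum_runner_beads l t n i j : (size l <= n)%N -> (i < e)%N -> (j < e)%N ->
  \sum_(c <- beads l t n) rescum j (c * e%:Z + i%:Z) =
  (sumn l)%:Z + \sum_(c <- beads [::] t n) rescum j (c * e%:Z + i%:Z).
Proof.
move=> ln ie je; rewrite !(eq_bigr _ (fun c _ => rescum_runner c ie je)) !sumrB.
by rewrite !sum_beads // !big_map /=; ring.
Qed.

Lemma part_rescount_formula l s rho t M j : (j < e)%N -> is_partition l ->
  eta_rel e l s rho t -> window e l s rho t M ->
  (part_rescount l s j)%:Z =
  (eweight e rho)%:Z + runner_vacuum_rescum t M j - vacuum_rescum s M j.
Proof.
move=> je l_part eta_ls win; have [lM rhoM] := win.
rewrite (@part_rescount_beads _ _ _ (absz (s - M * e%:Z)%R)) //; last by lia.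
rewrite (sum_beads_by_runner _ l_part eta_ls win) /eweight (big_morph Posz PoszD (erefl 0%:Z)).
rewrite /runner_vacuum_rescum -big_split; congr (_ - _); apply: eq_bigr => i _.
by rewrite sum_rescum_runner_beads //; have := rhoM i (ltn_ord i); lia.
Qed.

Lemma runner_vacuum_rescumS t M j : (j.+1 < e)%N ->
  runner_vacuum_rescum t M j - runner_vacuum_rescum t M j.+1 = (absz (t j - M)%R)%:Z.
Proof.
move=> je; rewrite -sumrB (bigD1 (Ordinal (ltnW je))) //= [X in _ + X]big1 ?addr0 => [|i ij].
  rewrite -sumrB (eq_bigr (fun=> 1)) ?sumr_one ?size_map ?size_iota // => c _.
  by rewrite !rescum_runner //; lia.
rewrite -sumrB big1_seq // => c _; rewrite !rescum_runner //; last exact: ltnW.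
by have := ltn_ord i; move: ij; rewrite -(inj_eq val_inj) /=; lia.
Qed.

Lemma sum_residue_indicator v : (\sum_(j < e) ((v %% e%:Z)%Z == j%:Z))%N = 1%N.
Proof.
have [r_ge0 r_lt] := andP (modz_bounds v).
have re : (absz (v %% e%:Z)%Z < e)%N by lia.
rewrite (bigD1 (Ordinal re)) //= big1 => [|j /eqP jr]; first by rewrite addn0; case: eqP; lia.
by case: eqP => // vj; case: jr; apply: val_inj => /=; lia.
Qed.

Lemma psize_sum_part_rescount l s : psize l = (\sum_(j < e) part_rescount l s j)%N.
Proof.
rewrite /part_rescount exchange_big /psize sumnE (big_nth 0%N) big_mkord.
apply: eq_bigr => x _; rewrite exchange_big /= (eq_bigr (fun=> 1%N)) => [|y _].
  by rewrite sum_nat_const card_ord muln1.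
exact: sum_residue_indicator.
Qed.

End Abacus.

(** * Blocks *)

Lemma common_lower_bound r (P : 'I_r -> int -> Prop) :
  (forall k, exists M0, forall M, M <= M0 -> P k M) -> exists M, forall k, P k M.
Proof.
case/fin_all_exists=> M0 HM0; exists (- \sum_k `|M0 k|) => k; apply: HM0.
have : `|M0 k| <= \sum_k `|M0 k| by rewrite (bigD1 k) //= lerDl sumr_ge0.
by move: (\sum_k _) => S; lia.
Qed.

Definition row_partition (m : nat) : seq nat := if m is 0%N then [::] else [:: m].

Lemma row_partitionP m : is_partition (row_partition m).
Proof. by case: m. Qed.

Lemma psize_row_partition m : psize (row_partition m) = m.
Proof. by case: m => //= m; rewrite /psize /= addn0. Qed.

Lemma sumr_eta_with (I : finType) (V : zmodType) (T : Type) (g : T -> V) (f : I -> T) i x :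
  \sum_j g ([eta f with i |-> x] j) = \sum_j g (f j) - g (f i) + g x.
Proof.
rewrite (bigD1 i) //= eqxx [in RHS](bigD1 i) //= (eq_bigr (fun j => g (f j))).
  by rewrite [g (f i) + _]addrC addrK addrC.
by move=> j /negbTE ->.
Qed.

Lemma eweight_eta_with e rho i p : (i < e)%N ->
  (eweight e [eta rho with i |-> p])%:Z =
  (eweight e rho)%:Z - (psize (rho i))%:Z + (psize p)%:Z.
Proof.
move=> ie; rewrite /eweight !(big_morph Posz PoszD (erefl 0%:Z)).
rewrite (bigD1 (Ordinal ie)) //= eqxx [in RHS](bigD1 (Ordinal ie)) //=.
rewrite (eq_bigr (fun j : 'I_e => (psize (rho j))%:Z)); first by ring.
by move=> j; rewrite -(inj_eq val_inj) /= => /negbTE ->.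
Qed.

Section Blocks.
Variables (e r : nat) (e_gt0 : (0 < e)%N).
Implicit Types (lam mu : 'I_r -> seq nat) (s : 'I_r -> int)
  (RH : 'I_r -> nat -> seq nat) (T : 'I_r -> nat -> int).

Definition eta_data lam s RH T := forall k, eta_rel e (lam k) (s k) (RH k) (T k).

Lemma common_window lam s RH T mu s' RH' T' : exists M, forall k,
  window e (lam k) (s k) (RH k) (T k) M /\ window e (mu k) (s' k) (RH' k) (T' k) M.
Proof.
apply: common_lower_bound => k.
have [M1 win1] := window_exists e_gt0 (lam k) (s k) (RH k) (T k).
have [M2 win2] := window_exists e_gt0 (mu k) (s' k) (RH' k) (T' k).
exists (Num.min M1 M2) => M; rewrite le_min => /andP[M1M M2M].
by split; [apply: win1 | apply: win2].
Qed.

Lemma rescount_formula lam s RH T M j : (j < e)%N -> is_multipartition lam ->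
  eta_data lam s RH T -> (forall k, window e (lam k) (s k) (RH k) (T k) M) ->
  (rescount e lam s j)%:Z = \sum_k ((eweight e (RH k))%:Z +
    runner_vacuum_rescum e (T k) M j - vacuum_rescum e (s k) M j).
Proof.
move=> je lam_part eta_lam win; rewrite /rescount (big_morph Posz PoszD (erefl 0%:Z)).
by apply: eq_bigr => k _; apply: part_rescount_formula.
Qed.

Lemma sum_runner_charges lam s RH T M j : (j.+1 < e)%N -> is_multipartition lam ->
  eta_data lam s RH T -> (forall k, window e (lam k) (s k) (RH k) (T k) M) ->
  \sum_k T k j = (rescount e lam s j)%:Z - (rescount e lam s j.+1)%:Z +
    \sum_k (M + vacuum_rescum e (s k) M j - vacuum_rescum e (s k) M j.+1).
Proof.
move=> je lam_part eta_lam win.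
rewrite !(rescount_formula _ lam_part eta_lam win) ?(ltnW je) // -sumrB -big_split /=.
apply: eq_bigr => k _; have [_ /(_ j (ltnW je))] := win k.
have := runner_vacuum_rescumS e_gt0 (T k) M je.
move: (runner_vacuum_rescum _ _ _ _) (runner_vacuum_rescum _ _ _ _) => a b.
by lia.
Qed.

Lemma sum_charges lam s RH T : is_multipartition lam -> eta_data lam s RH T ->
  \sum_k s k = \sum_(i < e) \sum_k T k i.
Proof.
move=> lam_part eta_lam; rewrite -exchange_big; apply: eq_bigr => k _.
by rewrite (eta_rel_charge e_gt0 (lam_part k) (eta_lam k)).
Qed.

Lemma block_sum_runner_charges lam s mu s' RL TL RM TM :
  is_multipartition lam -> is_multipartition mu -> block_equiv e lam s mu s' ->
  eta_data lam s RL TL -> eta_data mu s' RM TM ->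
  forall j, (j < e)%N -> \sum_k TL k j = \sum_k TM k j.
Proof.
move=> lam_part mu_part [s_eq [_ res_eq]] eta_lam eta_mu.
have [M win] := common_window lam s RL TL mu s' RM TM.
have below_last j : (j.+1 < e)%N -> \sum_k TL k j = \sum_k TM k j.
  move=> je; rewrite (sum_runner_charges je lam_part eta_lam (fun k => (win k).1)).
  rewrite (sum_runner_charges je mu_part eta_mu (fun k => (win k).2)).
  by rewrite !res_eq ?(ltnW je) //; congr (_ + _); apply: eq_bigr => k _; rewrite s_eq.
move=> j je; case: (ltnP j.+1 e) => [/below_last //| ej].
have : \sum_(i < e) (\sum_k TL k i - \sum_k TM k i) = 0.
  rewrite sumrB -(sum_charges lam_part eta_lam) -(sum_charges mu_part eta_mu).
  by rewrite (eq_bigr _ (fun k _ => s_eq k)) subrr.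
rewrite (bigD1 (Ordinal je)) //= [X in _ + X]big1 ?addr0 => [/eqP|i ij].
  by rewrite subr_eq0 => /eqP.
apply/eqP; rewrite subr_eq0; apply/eqP/below_last.
by have := ltn_ord i; move: ij; rewrite -(inj_eq val_inj) /=; lia.
Qed.

Lemma msize_rescount lam s : msize lam = (\sum_(j < e) rescount e lam s j)%N.
Proof.
rewrite /msize /rescount exchange_big /=; apply: eq_bigr => k _.
exact: psize_sum_part_rescount.
Qed.

Lemma block_equiv_of_eweight_sum lam s mu mu' s' RM RM' TM :
  block_equiv e lam s mu s' -> is_multipartition mu -> is_multipartition mu' ->
  eta_data mu s' RM TM -> eta_data mu' s' RM' TM ->
  \sum_k (eweight e (RM k))%:Z = \sum_k (eweight e (RM' k))%:Z ->
  block_equiv e lam s mu' s'.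
Proof.
move=> [s_eq [size_eq res_eq]] mu_part mu'_part eta_mu eta_mu' eweight_eq.
have [M win] := common_window mu s' RM TM mu' s' RM' TM.
have res_eq' j : (j < e)%N -> rescount e mu s' j = rescount e mu' s' j.
  move=> je; apply/eqP; rewrite -eqz_nat.
  rewrite (rescount_formula je mu_part eta_mu (fun k => (win k).1)).
  rewrite (rescount_formula je mu'_part eta_mu' (fun k => (win k).2)).
  by rewrite !sumrB !big_split /= eweight_eq.
split=> //; split=> [|j je]; last by rewrite res_eq // res_eq'.
rewrite size_eq (msize_rescount mu s') (msize_rescount mu' s').
by apply: eq_bigr => j _; apply: res_eq'.
Qed.

Lemma eta_data_exists_with mu s k0 rho0 t0 : eta_rel e (mu k0) (s k0) rho0 t0 ->
  exists RH T, eta_data mu s RH T /\ RH k0 = rho0.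
Proof.
move=> eta0.
have [RT eta_RT] : exists RT : 'I_r -> (nat -> seq nat) * (nat -> int),
    forall k, eta_rel e (mu k) (s k) (RT k).1 (RT k).2.
  apply: (choice (fun k (p : (nat -> seq nat) * (nat -> int)) =>
    eta_rel e (mu k) (s k) p.1 p.2)) => k.
  by have [rh [t eta]] := eta_rel_exists e_gt0 (mu k) (s k); exists (rh, t).
exists [eta (fun k => (RT k).1) with k0 |-> rho0], [eta (fun k => (RT k).2) with k0 |-> t0].
by split=> [k|]; rewrite /= ?eqxx //; case: eqP => [->|].
Qed.

(* Runner [i0] of component [k0] and runner [0] of component [k] are replaced by
   one-row partitions, one node smaller and one node larger respectively. *)
Lemma move_weight lam s mu s' RM TM k k0 i0 :
  is_multipartition mu -> block_equiv e lam s mu s' -> eta_data mu s' RM TM ->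
  k != k0 -> (i0 < e)%N -> (0 < psize (RM k0 i0))%N ->
  exists mu' RM', [/\ is_multipartition mu', block_equiv e lam s mu' s',
    eta_data mu' s' RM' TM & eweight e (RM' k) = (eweight e (RM k)).+1].
Proof.
move=> mu_part blk eta_mu kk0 i0e pos.
have RM_part k' i : (i < e)%N -> is_partition (RM k' i) by move=> ie; case: (eta_mu k' i ie).
pose Rk : nat -> seq nat := [eta RM k with 0%N |-> row_partition (psize (RM k 0%N)).+1].
pose Rk0 : nat -> seq nat := [eta RM k0 with i0 |-> row_partition (psize (RM k0 i0)).-1].
have Rk_part i : (i < e)%N -> is_partition (Rk i).
  by move=> ie; rewrite /Rk /=; case: ifP => _ //; apply: RM_part.
have Rk0_part i : (i < e)%N -> is_partition (Rk0 i).
  by move=> ie; rewrite /Rk0 /=; case: ifP => _; [apply: row_partitionP | apply: RM_part].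
have [lk [lk_part eta_k]] := eta_rel_change_runners e_gt0 (mu_part k) (eta_mu k) Rk_part.
have [lk0 [lk0_part eta_k0]] := eta_rel_change_runners e_gt0 (mu_part k0) (eta_mu k0) Rk0_part.
have wk : (eweight e Rk)%:Z = (eweight e (RM k))%:Z + 1.
  by rewrite eweight_eta_with // psize_row_partition; lia.
have wk0 : (eweight e Rk0)%:Z = (eweight e (RM k0))%:Z - 1.
  by rewrite eweight_eta_with // psize_row_partition; lia.
pose mu' : 'I_r -> seq nat := [eta mu with k |-> lk, k0 |-> lk0].
pose RM' : 'I_r -> nat -> seq nat := [eta RM with k |-> Rk, k0 |-> Rk0].
have mu'_part : is_multipartition mu'.
  by move=> k'; rewrite /mu' /=; case: eqP => _; [|case: eqP].
have eta_mu' : eta_data mu' s' RM' TM.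
  by move=> k'; rewrite /mu' /RM' /=; case: eqP => [->|_]; [|case: eqP => [->|]].
exists mu', RM'; split=> //; last first.
  by have := wk; rewrite /RM' /= eqxx; lia.
apply: (block_equiv_of_eweight_sum blk mu_part mu'_part eta_mu eta_mu').
pose g R := (eweight e R)%:Z.
rewrite /RM' /= (sumr_eta_with g (fun j => if j == k0 then Rk0 else RM j)).
rewrite /= (negbTE kk0) (sumr_eta_with g RM) /g wk wk0; ring.
Qed.

Lemma not_core_block_witness lam s : ~ core_block e lam s ->
  exists mu s' k rho t, [/\ is_multipartition mu, block_equiv e lam s mu s',
    eta_rel e (mu k) (s' k) rho t & (0 < eweight e rho)%N].
Proof.
move=> not_core; apply: NNPP => none; apply: not_core => mu s' mu_part blk k rho t eta.
by apply/eqP; rewrite -leqn0 leqNgt; apply/negP => w; apply: none; exists mu, s', k, rho, t.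
Qed.

Lemma rouquier_block_runner_charges_le lam s mu s' RM TM k0 k i : (i.+1 < e)%N ->
  rouquier_block e lam s -> is_multipartition mu -> block_equiv e lam s mu s' ->
  eta_data mu s' RM TM -> (0 < eweight e (RM k0))%N -> TM k i <= TM k i.+1.
Proof.
move=> ie rouquier mu_part blk eta_mu w0.
suff [mu' [RM' [mu'_part blk' eta_mu' w]]] : exists mu' RM', [/\ is_multipartition mu',
    block_equiv e lam s mu' s', eta_data mu' s' RM' TM & (0 < eweight e (RM' k))%N].
  by have := rouquier mu' s' mu'_part blk' k (RM' k) (TM k) (eta_mu' k) i ie; lia.
have [->|kk0] := eqVneq k k0; first by exists mu, RM.
have /existsP[i0 pos] : [exists j : 'I_e, 0 < psize (RM k0 j)]%N.
  move: w0; apply: contraLR => /existsPn none; rewrite -leqNgt leqn0 sum_nat_eq0.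
  by apply/forallP => j; have := none j; rewrite lt0n negbK.
have [mu' [RM' [mu'_part blk' eta_mu' wk]]] :=
  move_weight mu_part blk eta_mu kk0 (ltn_ord i0) pos.
by exists mu', RM'; rewrite wk.
Qed.

End Blocks.

Theorem lemma3p17 (e r : nat) (he : (2 <= e)%N) (hr : (1 <= r)%N)
    (lam : 'I_r -> seq nat) (s : 'I_r -> int)
    (hlam : is_multipartition lam)
    (hR : rouquier_block e lam s) (hnc : ~ core_block e lam s)
    (rho : 'I_r -> nat -> seq nat) (t : 'I_r -> nat -> int)
    (heta : forall k, eta_rel e (lam k) (s k) (rho k) (t k)) :
  forall i : nat, (i.+1 < e)%N ->
    0 <= \sum_(k < r) t k i.+1 - \sum_(k < r) t k i.
Proof.
move=> i ie; have e_gt0 : (0 < e)%N by lia.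
have [mu [s' [k0 [rho0 [t0 [mu_part blk eta0 w0]]]]]] := not_core_block_witness hnc.
have [RM [TM [eta_mu RM_k0]]] := eta_data_exists_with e_gt0 eta0.
have wk0 : (0 < eweight e (RM k0))%N by rewrite RM_k0.
have charge_sum := block_sum_runner_charges e_gt0 hlam mu_part blk heta eta_mu.
rewrite !charge_sum ?(ltnW ie) // -sumrB; apply: sumr_ge0 => k _; rewrite subr_ge0.
exact: (rouquier_block_runner_charges_le e_gt0 k ie hR mu_part blk eta_mu wk0).
Qed.
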